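(* Let $F_{\mathrm{mod}}$ be a toy model H\'enon-like diffeomorphism with $DF_{\mathrm{mod}}(w)=\begin{pmatrix}A_1(w)&\mathbf 0\\ C_1(w)&D_1(w)\end{pmatrix}$ and $DF^N_{\mathrm{mod}}(w)=\begin{pmatrix}A_N(w)&\mathbf 0\\ C_N(w)&D_N(w)\end{pmatrix}$. Suppose $\|D_1\|<m(A_1)$. Then there is $\kappa>0$, independent of $N$, such that $\|C_N A_N^{-1}\|<\kappa$ for all $N\ge1$.
   Context: A toy model H\'enon-like map is $F_{\mathrm{mod}}(x,y,z)=(f(x)-\varepsilon(x,y),\,x,\,\delta(x,y,z))$ on a box $B\subset\mathbb R^3$ ($f$ unimodal, $\varepsilon,\delta$ small analytic). In the block decomposition of $DF_{\mathrm{mod}}$ with respect to $\mathbb R^2\times\mathbb R$, $A_1(w)=DF_{2d}(x,y)$ is the $2\times2$ derivative of $F_{2d}(x,y)=(f(x)-\varepsilon(x,y),x)$, $\mathbf 0$ is the zero column, $C_1(w)=(\partial_x\delta(w)\ \partial_y\delta(w))$ and $D_1(w)=\partial_z\delta(w)$; $A_N,C_N,D_N$ are the corresponding blocks of $DF^N_{\mathrm{mod}}(w)$. For a linear map $L$, $m(L)=\|L^{-1}\|^{-1}$ is the minimum expansion rate; norms and $m(\cdot)$ of these matrix-valued functions are taken as sup (respectively inf) over points of the domain. *)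

From HB Require Import structures.
From mathcomp Require Import all_boot all_order all_algebra.
From mathcomp Require Import all_classical all_reals all_analysis.
Set Implicit Arguments. Unset Strict Implicit. Unset Printing Implicit Defensive.
Import Order.TTheory GRing.Theory Num.Theory.
Import numFieldNormedType.Exports.
Local Open Scope classical_set_scope.
Local Open Scope ring_scope.

Section ToyDefs.
Variable R : realType.

Definition eucl (n : nat) (v : 'cV[R]_n) : R := Num.sqrt (\sum_i (v i ord0) ^+ 2).

Definition opnorm (m n : nat) (L : 'M[R]_(m, n)) : R :=
  sup [set eucl (L *m v) | v in [set v : 'cV[R]_n | eucl v = 1]].

Definition minexp (n : nat) (L : 'M[R]_n) : R :=
  if L \in unitmx then (opnorm (invmx L))^-1 else 0.

Definition supOn (T : Type) (S : set T) (g : T -> R) : R := sup (g @` S).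
Definition infOn (T : Type) (S : set T) (g : T -> R) : R := inf (g @` S).

Definition cx (w : 'rV[R]_3) : R := w ord0 (inord 0).
Definition cy (w : 'rV[R]_3) : R := w ord0 (inord 1).
Definition cz (w : 'rV[R]_3) : R := w ord0 (inord 2).

Definition toyF (f : R -> R) (eps : R -> R -> R) (delta : R -> R -> R -> R)
  (w : 'rV[R]_3) : 'rV[R]_3 :=
  \row_(i < 3) (if (i : nat) == 0%N then f (cx w) - eps (cx w) (cy w)
                else if (i : nat) == 1%N then cx w
                else delta (cx w) (cy w) (cz w)).

(* Jacobian matrix of G at w: entry (i, j) = d G_i / d w_j, built from the
   (Frechet) differential 'd G w of mathcomp-analysis. *)
Definition jac (G : 'rV[R]_3 -> 'rV[R]_3) (w : 'rV[R]_3) : 'M[R]_3 :=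
  (lin1_mx ('d G w))^T.

Definition blkA (M : 'M[R]_3) : 'M[R]_2 := ulsubmx (M : 'M[R]_(2 + 1, 2 + 1)).
Definition blkB (M : 'M[R]_3) : 'M[R]_(2, 1) := ursubmx (M : 'M[R]_(2 + 1, 2 + 1)).
Definition blkC (M : 'M[R]_3) : 'M[R]_(1, 2) := dlsubmx (M : 'M[R]_(2 + 1, 2 + 1)).
Definition blkD (M : 'M[R]_3) : 'M[R]_1 := drsubmx (M : 'M[R]_(2 + 1, 2 + 1)).

Definition box (a b : 'rV[R]_3) : set 'rV[R]_3 :=
  [set w | forall i : 'I_3, a ord0 i <= w ord0 i <= b ord0 i].

Definition iter_dom (F : 'rV[R]_3 -> 'rV[R]_3) (B : set 'rV[R]_3) (N : nat) :
  set 'rV[R]_3 := [set w | forall k, (k < N)%N -> B (iter k F w)].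

End ToyDefs.

From HB Require Import structures.
From mathcomp Require Import all_boot all_order all_algebra.
From mathcomp Require Import all_classical all_reals all_analysis.
Import Order.TTheory GRing.Theory Num.Theory.
Import numFieldNormedType.Exports.
Local Open Scope classical_set_scope.
Local Open Scope ring_scope.

(* Write X_N := C_N A_N^-1.  The first two coordinates of F_mod do not depend on z, so every
   DF^N is lower block-triangular, and the chain rule DF^(N+1) w = DF (F^N w) DF^N w gives
   A_(N+1) = A_1 A_N and C_(N+1) = C_1 A_N + D_1 C_N, i.e. X_(N+1) = (C_1 + D_1 X_N) A_1^-1.
   Hence |X_(N+1)| <= (c + s |X_N|) / m, where c bounds |C_1| on the compact box,
   s = sup |D_1| and m = inf m(A_1).  Since s < m and X_0 = 0, induction keeps |X_N| below
   the fixed point c / (m - s) of this affine map. *)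

Set Implicit Arguments. Unset Strict Implicit.

Section EuclideanNorm.
Variable R : realType.

Lemma eucl_ge0 n (v : 'cV[R]_n) : 0 <= eucl v.
Proof. exact: sqrtr_ge0. Qed.

Lemma eucl0 n : eucl (0 : 'cV[R]_n) = 0.
Proof. by rewrite /eucl big1 ?sqrtr0 // => i _; rewrite mxE expr0n. Qed.

Lemma eucl_cV1 (v : 'cV[R]_1) : eucl v = `|v 0 0|.
Proof. by rewrite /eucl big_ord1 sqrtr_sqr. Qed.

Lemma eucl_sum_ge0 n (v : 'cV[R]_n) : 0 <= \sum_i (v i 0) ^+ 2.
Proof. by apply: sumr_ge0 => i _; rewrite sqr_ge0. Qed.

Lemma eucl_coord n (v : 'cV[R]_n) i : `|v i 0| <= eucl v.
Proof.
rewrite /eucl -sqrtr_sqr ler_sqrt ?eucl_sum_ge0 // (bigD1 i) //= lerDl.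
by apply: sumr_ge0 => j _; rewrite sqr_ge0.
Qed.

Lemma euclZ n k (v : 'cV[R]_n) : eucl (k *: v) = `|k| * eucl v.
Proof.
rewrite /eucl -sqrtr_sqr -sqrtrM ?sqr_ge0 // mulr_sumr; congr Num.sqrt.
by apply: eq_bigr => i _; rewrite mxE exprMn.
Qed.

Lemma eucl_eq0 n (v : 'cV[R]_n) : eucl v = 0 -> v = 0.
Proof.
move/eqP; rewrite /eucl sqrtr_eq0 => sum_le0.
have sum0 : \sum_i (v i 0) ^+ 2 = 0 by apply/eqP; rewrite eq_le sum_le0 eucl_sum_ge0.
apply/matrixP => i j; rewrite (ord1 j) mxE.
have /eqP := psumr_eq0P (fun i _ => sqr_ge0 (v i 0)) sum0 (i := i) isT.
by rewrite sqrf_eq0 => /eqP.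
Qed.

Lemma exists_eucl1 n : exists v : 'cV[R]_n.+1, eucl v = 1.
Proof.
exists (delta_mx 0 0); rewrite /eucl (bigD1 ord0) //= big1 ?addr0.
  by rewrite mxE eqxx expr1n sqrtr1.
by move=> i /negbTE i_neq0; rewrite mxE i_neq0 expr0n.
Qed.

End EuclideanNorm.

Section OperatorNorm.
Variable R : realType.

Lemma entry_le_mx_norm m n (L : 'M[R]_(m, n)) i j : `|L i j| <= `|L|.
Proof.
rewrite [X in _ <= X]mx_normrE.
exact: (le_bigmax 0 (fun ij : 'I_m * 'I_n => `|L ij.1 ij.2|) (i, j)).
Qed.

Lemma eucl_mulmx_le_entries m n (L : 'M[R]_(m, n.+1)) M v :
  (forall i j, `|L i j| <= M) -> eucl v = 1 ->
  eucl (L *m v) <= Num.sqrt (m%:R * (n.+1%:R * M) ^+ 2).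
Proof.
move=> LM v1; rewrite /eucl ler_sqrt ?(mulr_ge0 (ler0n _ _) (sqr_ge0 _)) //.
rewrite (_ : m%:R * _ = \sum_(i < m) (n.+1%:R * M) ^+ 2); last first.
  by rewrite sumr_const card_ord mulr_natl.
apply: ler_sum => i _.
have M0 : 0 <= M := le_trans (normr_ge0 _) (LM i 0).
rewrite -[X in X <= _]real_normK ?num_real //; apply: lerXn2r;
  rewrite ?nnegrE ?normr_ge0 ?mulr_ge0 //.
rewrite mxE (le_trans (ler_norm_sum _ _ _)) //.
rewrite (_ : n.+1%:R * M = \sum_(j < n.+1) M); last first.
  by rewrite sumr_const card_ord mulr_natl.
apply: ler_sum => j _; rewrite normrM -[M]mulr1.
by apply: ler_pM => //; rewrite -v1 eucl_coord.
Qed.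

Lemma opnorm_has_sup m n (L : 'M[R]_(m, n.+1)) :
  has_sup [set eucl (L *m v) | v in [set v : 'cV[R]_n.+1 | eucl v = 1]].
Proof.
split; first by have [v v1] := exists_eucl1 R n; exists (eucl (L *m v)), v.
exists (Num.sqrt (m%:R * (n.+1%:R * `|L|) ^+ 2)) => _ [v v1 <-].
by apply: eucl_mulmx_le_entries v1 => i j; apply: entry_le_mx_norm.
Qed.

Lemma opnorm_ge0 m n (L : 'M[R]_(m, n.+1)) : 0 <= opnorm L.
Proof.
have [v v1] := exists_eucl1 R n.
apply: le_trans (eucl_ge0 (L *m v)) (sup_upper_bound (opnorm_has_sup L) _).
by exists v.
Qed.

Lemma opnorm_ub m n (L : 'M[R]_(m, n.+1)) v : eucl (L *m v) <= opnorm L * eucl v.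
Proof.
have [/eucl_eq0 ->|v_neq0] := eqVneq (eucl v) 0; first by rewrite mulmx0 !eucl0 mulr0.
have v_gt0 : 0 < eucl v by rewrite lt_def v_neq0 eucl_ge0.
have u1 : eucl ((eucl v)^-1 *: v) = 1.
  by rewrite euclZ ger0_norm ?invr_ge0 ?eucl_ge0 // mulVf.
have := sup_upper_bound (opnorm_has_sup L) (ex_intro2 _ _ _ u1 erefl).
rewrite -scalemxAr euclZ ger0_norm ?invr_ge0 ?eucl_ge0 //.
by rewrite ler_pdivrMl // mulrC.
Qed.

Lemma opnorm_le m n (L : 'M[R]_(m, n.+1)) c :
  (forall v, eucl v = 1 -> eucl (L *m v) <= c) -> opnorm L <= c.
Proof.
move=> Lc; apply: ge_sup; last by move=> _ [v v1 <-]; apply: Lc.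
by have [v v1] := exists_eucl1 R n; exists (eucl (L *m v)), v.
Qed.

Lemma opnorm0 m n : opnorm (0 : 'M[R]_(m, n.+1)) = 0.
Proof.
apply/le_anti; rewrite opnorm_ge0 andbT.
by apply: opnorm_le => v _; rewrite mul0mx eucl0.
Qed.

Lemma opnorm_le_entries m n (L : 'M[R]_(m, n.+1)) M :
  (forall i j, `|L i j| <= M) -> opnorm L <= Num.sqrt (m%:R * (n.+1%:R * M) ^+ 2).
Proof. by move=> LM; apply: opnorm_le => v; apply: eucl_mulmx_le_entries. Qed.

Lemma opnorm_mulmx m n p (P : 'M[R]_(m, n.+1)) (Q : 'M[R]_(n.+1, p.+1)) :
  opnorm (P *m Q) <= opnorm P * opnorm Q.
Proof.
apply: opnorm_le => v v1; rewrite -mulmxA.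
apply: le_trans (opnorm_ub P _) _; rewrite ler_wpM2l ?opnorm_ge0 //.
by have := opnorm_ub Q v; rewrite v1 mulr1.
Qed.

Lemma opnorm_rowD n (L1 L2 : 'M[R]_(1, n.+1)) :
  opnorm (L1 + L2) <= opnorm L1 + opnorm L2.
Proof.
apply: opnorm_le => v v1.
have Lv_le (L : 'M[R]_(1, n.+1)) : `|(L *m v) 0 0| <= opnorm L.
  by have := opnorm_ub L v; rewrite v1 mulr1 eucl_cV1.
by rewrite mulmxDl eucl_cV1 mxE (le_trans (ler_normD _ _)) // lerD.
Qed.

Lemma minexp_ge0 n (L : 'M[R]_n.+1) : 0 <= minexp L.
Proof. by rewrite /minexp; case: ifP => // _; rewrite invr_ge0 opnorm_ge0. Qed.

Lemma minexp_ge_invmx n (L : 'M[R]_n.+1) c : 0 < c -> c <= minexp L ->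
  L \in unitmx /\ opnorm (invmx L) <= c^-1.
Proof.
move=> c_gt0; rewrite /minexp; case: ifP => [L_unit cL|_ /(lt_le_trans c_gt0)]; last first.
  by rewrite ltxx.
split=> //; have := lt_le_trans c_gt0 cL; rewrite invr_gt0 => inv_gt0.
by rewrite -[opnorm _]invrK lef_pV2 ?posrE ?invr_gt0.
Qed.

End OperatorNorm.

Section LowerBlockTriangular.
Variable R : realType.
Implicit Types P Q : 'M[R]_(2 + 1).

Lemma blk1 : [/\ blkA (1%:M : 'M[R]_3) = 1%:M, blkB (1%:M : 'M[R]_3) = 0
  & blkC (1%:M : 'M[R]_3) = 0].
Proof.
split; apply/matrixP => i j; rewrite !mxE -val_eqE //=.
  by rewrite ltn_eqF // ltn_addr.
by rewrite gtn_eqF // ltn_addr.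
Qed.

Lemma blk_mul P Q : blkB P = 0 -> blkB Q = 0 ->
  [/\ blkA (P *m Q) = blkA P *m blkA Q, blkB (P *m Q) = 0 &
      blkC (P *m Q) = blkC P *m blkA Q + blkD P *m blkC Q].
Proof.
rewrite /blkA /blkB /blkC /blkD => P0 Q0.
have -> : P = block_mx (ulsubmx P) 0 (dlsubmx P) (drsubmx P) by rewrite -P0 submxK.
have -> : Q = block_mx (ulsubmx Q) 0 (dlsubmx Q) (drsubmx Q) by rewrite -Q0 submxK.
rewrite mulmx_block !block_mxKul !block_mxKur !block_mxKdl.
by rewrite block_mxKdr !mul0mx !mulmx0 !addr0.
Qed.

Lemma blk_ratio_mul P Q : blkB P = 0 -> blkB Q = 0 ->
  blkA P \in unitmx -> blkA Q \in unitmx ->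
  blkA (P *m Q) \in unitmx /\
  blkC (P *m Q) *m invmx (blkA (P *m Q)) =
    (blkC P + blkD P *m (blkC Q *m invmx (blkA Q))) *m invmx (blkA P).
Proof.
move=> P0 Q0 PA QA; have [-> _ ->] := blk_mul P0 Q0.
have PQA : blkA P *m blkA Q \in unitmx by rewrite unitmx_mul PA QA.
split=> //; rewrite -[RHS](mulmxK PQA); congr (_ *m _).
by rewrite (mulmxA (_ *m invmx _)) (mulmxKV PA) mulmxDl -(mulmxA (blkD P)) (mulmxKV QA).
Qed.

Lemma blkBE (M : 'M[R]_3) i j : blkB M i j = M (lshift 1 i) (rshift 2 j).
Proof. by rewrite !mxE. Qed.

Lemma blkCE (M : 'M[R]_3) i j : blkC M i j = M (rshift 2 i) (lshift 1 j).
Proof. by rewrite !mxE. Qed.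

Lemma blkDE (M : 'M[R]_3) i j : blkD M i j = M (rshift 2 i) (rshift 2 j).
Proof. by rewrite !mxE. Qed.

End LowerBlockTriangular.

Section Jacobian.
Variable R : realType.
Implicit Types (F G H : 'rV[R]_3 -> 'rV[R]_3) (B : set 'rV[R]_3).

Lemma jacE G w i j : jac G w i j = 'd G w (delta_mx 0 j) 0 i.
Proof. by rewrite !mxE. Qed.

Lemma jac_id w : jac (@id 'rV[R]_3) w = 1%:M.
Proof. by apply/matrixP => i j; rewrite jacE diff_val !mxE eqxx eq_sym. Qed.

Lemma jac_comp G H w : differentiable H w -> differentiable G (H w) ->
  jac (G \o H) w = jac G (H w) *m jac H w.
Proof.
move=> dH dG.
have dGH v : 'd (G \o H) w v = 'd G (H w) ('d H w v) :=
  congr1 (fun L => L v) (diff_comp dH dG).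
have lin1_comp : lin1_mx ('d (G \o H) w) = lin1_mx ('d H w) *m lin1_mx ('d G (H w)).
  apply/matrixP => i j; rewrite [LHS]mxE dGH.
  have row_comp u : u *m (lin1_mx ('d H w) *m lin1_mx ('d G (H w))) = 'd G (H w) ('d H w u).
    by rewrite mulmxA (mul_rV_lin1 ('d H w) u); apply: mul_rV_lin1.
  by rewrite -row_comp -rowE mxE.
by rewrite /jac -trmx_mul; exact: (congr1 trmx lin1_comp).
Qed.

Lemma differentiable_iter F B N w : (forall w, B w -> differentiable F w) ->
  iter_dom F B N w -> differentiable (iter N F) w.
Proof.
move=> dF; elim: N => [|N IH] dom; first exact: ex_diff.
apply: (@differentiable_comp _ _ _ _ (iter N F) F); last exact/dF/dom.
by apply: IH => k /ltnW; apply: dom.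
Qed.

Lemma jac_iterS F B N w : (forall w, B w -> differentiable F w) ->
  iter_dom F B N.+1 w ->
  jac (iter N.+1 F) w = jac F (iter N F w) *m jac (iter N F) w.
Proof.
move=> dF dom; apply: (@jac_comp F (iter N F)); last exact/dF/dom.
by apply: (differentiable_iter dF) => k /ltnW; apply: dom.
Qed.

(* The [i]-th coordinates of the difference quotients along [e_j] vanish, hence so does
   that of their limit. *)
Lemma jac_eq0_const_line G w i j : differentiable G w ->
  (forall h : R, G (h *: delta_mx 0 j + w) 0 i = G w 0 i) -> jac G w i j = 0.
Proof.
move=> dG G_line; rewrite jacE -(deriveE _ dG).
set v := delta_mx 0 j.
have quot_cvg : (fun h : R => h^-1 *: ((G \o shift w) (h *: v) - G w)) @ 0^'
    --> 'D_v G w := diff_derivable dG.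
have := cvg_comp _ _ quot_cvg (@coord_continuous R 1 3 0 i _).
have -> : (fun M : 'rV[R]_3 => M 0 i) \o
    (fun h : R => h^-1 *: ((G \o shift w) (h *: v) - G w)) = cst 0.
  by apply/funext => h /=; rewrite !mxE G_line subrr mulr0.
by move/(cvg_lim (@Rhausdorff R)) <-; rewrite lim_cst.
Qed.

End Jacobian.

Section ToyModel.
Variables (R : realType) (f : R -> R) (eps : R -> R -> R) (delta : R -> R -> R -> R).

Lemma toyF_const_along_z w (k : 'I_3) (h : R) : (k < 2)%N ->
  toyF f eps delta (h *: delta_mx 0 (rshift 2 0) + w) 0 k = toyF f eps delta w 0 k.
Proof.
have shift_xy (l : nat) : (l < 2)%N ->
    (h *: delta_mx 0 (rshift 2 0) + w) 0 (inord l) = w 0 (inord l).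
  move=> l_lt2; rewrite !mxE eqxx /= -val_eqE /= inordK ?(ltn_trans l_lt2) //.
  by rewrite ltn_eqF // mulr0 add0r.
have ex : cx (h *: delta_mx 0 (rshift 2 0) + w) = cx w := shift_xy 0%N isT.
have ey : cy (h *: delta_mx 0 (rshift 2 0) + w) = cy w := shift_xy 1%N isT.
by rewrite !mxE ex ey; case: k => [[|[|k]] ?].
Qed.

Lemma toyF_jac_blkB w : differentiable (toyF f eps delta) w ->
  blkB (jac (toyF f eps delta) w) = 0.
Proof.
move=> dF; apply/matrixP => i j.
rewrite blkBE (ord1 j) [RHS]mxE.
apply: jac_eq0_const_line dF _ => h.
by apply: toyF_const_along_z; apply: ltn_ord i.
Qed.

End ToyModel.

Section Box.
Variable R : realType.

Lemma box_compact (a b : 'rV[R]_3) : compact (box a b).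
Proof.
have -> : box a b = [set v | forall i, `[a 0 i, b 0 i]%classic (v 0 i)].
  by apply/seteqP; split => v /= v_ab i; have := v_ab i; rewrite /= in_itv.
by apply: (@rV_compact R 3 (fun i => `[a 0 i, b 0 i]%classic)) => i;
  exact: segment_compact.
Qed.

Lemma continuous_box_bounded_entries m n (G : 'rV[R]_3 -> 'M[R]_(m, n)) a b :
  {within box a b, continuous G} ->
  exists M, forall w, box a b w -> forall i j, `|G w i j| <= M.
Proof.
move=> G_cont.
have := compact_bounded (continuous_compact G_cont (box_compact (a:=a) (b:=b))).
rewrite /bounded_near /= => bnd; have [M GM] := filter_ex bnd.
exists M => w w_ab i j.
by apply: le_trans (entry_le_mx_norm _ i j) _; apply: GM; exists w.
Qed.

End Box.

Lemma affine_fixpoint (R : realFieldType) (c s m : R) : 0 < m -> s < m ->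
  (c + s * (c / (m - s))) / m = c / (m - s).
Proof.
move=> m_gt0 s_lt_m; set K := c / (m - s).
have cK : c = K * (m - s) by rewrite /K divfK // gt_eqF // subr_gt0.
by rewrite {1}cK mulrBr [s * K]mulrC subrK mulfK // gt_eqF.
Qed.

Section BlockTriangularIterates.
Variables (R : realType) (F : 'rV[R]_3 -> 'rV[R]_3) (B : set 'rV[R]_3) (c s m : R).
Hypotheses (dF : forall w, B w -> differentiable F w)
  (jacF_blkB : forall w, B w -> blkB (jac F w) = 0)
  (jacF_blkC : forall w, B w -> opnorm (blkC (jac F w)) <= c)
  (jacF_blkD : forall w, B w -> opnorm (blkD (jac F w)) <= s)
  (jacF_blkA : forall w, B w -> m <= minexp (blkA (jac F w)))
  (c_ge0 : 0 <= c) (s_lt_m : s < m).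

Lemma jac_iter_blk_bound N w : iter_dom F B N w ->
  [/\ blkB (jac (iter N F) w) = 0, blkA (jac (iter N F) w) \in unitmx &
      opnorm (blkC (jac (iter N F) w) *m invmx (blkA (jac (iter N F) w))) <= c / (m - s)].
Proof.
have K_ge0 : 0 <= c / (m - s) by rewrite divr_ge0 // subr_ge0 ltW.
elim: N w => [|N IH] w dom.
  rewrite (_ : jac (iter 0 F) w = 1%:M); last exact: jac_id.
  have [-> -> ->] := @blk1 R.
  by split; rewrite ?unitmx1 ?mul0mx ?opnorm0.
have domN : iter_dom F B N w by move=> k /ltnW; apply: dom.
have Bw : B (iter N F w) := dom N (ltnSn N).
have [B0 A_unit X_le] := IH w domN.
have s_ge0 : 0 <= s := le_trans (opnorm_ge0 _) (jacF_blkD Bw).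
have m_gt0 : 0 < m := le_lt_trans s_ge0 s_lt_m.
have [A1_unit A1inv_le] := minexp_ge_invmx m_gt0 (jacF_blkA Bw).
rewrite (jac_iterS dF dom).
have [_ -> _] := blk_mul (jacF_blkB Bw) B0.
have [-> ->] := blk_ratio_mul (jacF_blkB Bw) B0 A1_unit A_unit.
split; [done | done |].
have num_le : opnorm (blkC (jac F (iter N F w)) + blkD (jac F (iter N F w)) *m
    (blkC (jac (iter N F) w) *m invmx (blkA (jac (iter N F) w)))) <= c + s * (c / (m - s)).
  apply: le_trans (opnorm_rowD _ _) (lerD (jacF_blkC Bw) _).
  apply: le_trans (opnorm_mulmx _ _) _.
  exact: ler_pM (opnorm_ge0 _) (opnorm_ge0 _) (jacF_blkD Bw) X_le.
apply: le_trans (opnorm_mulmx _ _) _.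
rewrite -(affine_fixpoint c m_gt0 s_lt_m).
exact: ler_pM (opnorm_ge0 _) (opnorm_ge0 _) num_le A1inv_le.
Qed.

End BlockTriangularIterates.

Unset Implicit Arguments.
Set Strict Implicit.

Theorem lemma7p2 (R : realType) (f : R -> R) (eps : R -> R -> R)
  (delta : R -> R -> R -> R) (a b : 'rV[R]_3) :
  let F := toyF f eps delta in
  let B := box a b in
  (* regularity (implied by analyticity of f, eps, delta near B): F is C^1 on B *)
  (forall w, B w -> differentiable F w) ->
  {within B, continuous (jac F)} ->
  (* hypothesis ||D_1|| < m(A_1), sup and inf taken over B *)
  supOn B (fun w => opnorm (blkD (jac F w))) < infOn B (fun w => minexp (blkA (jac F w))) ->
  exists kappa : R, 0 < kappa /\
    forall N : nat, (1 <= N)%N ->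
    forall w, iter_dom F B N w ->
      opnorm (blkC (jac (iter N F) w) *m invmx (blkA (jac (iter N F) w))) < kappa.
Proof.
move=> F B dF jacF_cont gap.
set s := supOn B _ in gap; set m := infOn B _ in gap.
have [M JM] := continuous_box_bounded_entries jacF_cont.
pose c := Num.sqrt (1%:R * (2%:R * M) ^+ 2).
have jacF_blkC w : B w -> opnorm (blkC (jac F w)) <= c.
  by move=> Bw; apply: opnorm_le_entries => i j; rewrite blkCE; apply: JM.
have jacF_blkD w : B w -> opnorm (blkD (jac F w)) <= s.
  move=> Bw; rewrite /s /supOn; apply: ub_le_sup; last by exists w.
  exists (Num.sqrt (1%:R * (1%:R * M) ^+ 2)) => _ [u Bu <-].
  by apply: opnorm_le_entries => i j; rewrite blkDE; apply: JM.
have jacF_blkA w : B w -> m <= minexp (blkA (jac F w)).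
  move=> Bw; rewrite /m /infOn; apply: ge_inf; last by exists w.
  by exists 0 => _ [u _ <-]; apply: minexp_ge0.
have jacF_blkB w : B w -> blkB (jac F w) = 0 by move=> Bw; apply/toyF_jac_blkB/dF.
have K_ge0 : 0 <= c / (m - s) by rewrite divr_ge0 ?sqrtr_ge0 // subr_ge0 ltW.
exists (c / (m - s) + 1); split; first by rewrite (le_lt_trans K_ge0) // ltrDl ltr01.
move=> N _ w dom.
have [_ _ X_le] :=
  jac_iter_blk_bound dF jacF_blkB jacF_blkC jacF_blkD jacF_blkA (sqrtr_ge0 _) gap dom.
by rewrite (le_lt_trans X_le) // ltrDl ltr01.
Qed.
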